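(* Let $T\ge 2$ and $1\le k<\lceil T/2\rceil$; put $T_c=\lceil T/(2k-1)\rceil$ and $T_{\text{last}}=T-(2k-1)(T_c-1)$. For $j\in\{1,\dots,T_c-1\}$ let $\mathcal{P}_j$ be the set of distinct vectors among $\{\mathbf{0}_{2k-1},\mathbf{1}_{2k-1},\mathbf{e}^{2k-1}_1,\dots,\mathbf{e}^{2k-1}_{2k-1}\}\subseteq\mathbb{F}_2^{2k-1}$, and let $\mathcal{P}_{T_c}$ be the set of distinct vectors among $\{\mathbf{0}_{T_{\text{last}}},\mathbf{1}_{T_{\text{last}}},\mathbf{e}^{T_{\text{last}}}_1,\dots,\mathbf{e}^{T_{\text{last}}}_{T_{\text{last}}}\}\subseteq\mathbb{F}_2^{T_{\text{last}}}$. Let $\mathbf{P}$ be the matrix whose rows are all concatenations $(\mathbf{v}_1,\mathbf{v}_2,\dots,\mathbf{v}_{T_c})\in\mathbb{F}_2^T$ with $\mathbf{v}_j\in\mathcal{P}_j$ for each $j$ (one row per element of $\mathcal{P}_1\times\cdots\times\mathcal{P}_{T_c}$). Then $\mathbf{P}$ has $\prod_{j=1}^{T_c}|\mathcal{P}_j|$ rows, which equals $2^T$ if $k=1$, $2(2k+1)^{T_c-1}$ if $k\ne1$ and $T_{\text{last}}=1$, and $(2k+1)^{T_c-1}(T_{\text{last}}+2)$ otherwise; and every vector of $\mathbb{F}_2^T$ is the sum over $\mathbb{F}_2$ of at most $k$ rows of $\mathbf{P}$.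
   Context: $\mathbf{0}_j$ and $\mathbf{1}_j$ denote the all-zero and all-ones row vectors of length $j$, and $\mathbf{e}^j_i$ is the length-$j$ row vector with a single $1$ in position $i$. *)

From HB Require Import structures.
From mathcomp Require Import all_boot all_order all_algebra.
Set Implicit Arguments. Unset Strict Implicit. Unset Printing Implicit Defensive.
Import GRing.Theory.
Local Open Scope ring_scope.

Definition ceil_div (a b : nat) : nat := ((a + b.-1) %/ b)%N.

Definition blen (k : nat) : nat := (2 * k - 1)%N.
Definition Tc (T k : nat) : nat := ceil_div T (blen k).
Definition Tlast (T k : nat) : nat := (T - blen k * (Tc T k).-1)%N.

(* size of block j (0-indexed, j = 0 .. Tc-1): 2k-1 for j < Tc-1, T_last for the last *)
Definition blk_size (T k j : nat) : nat :=
  if (j.+1 < Tc T k)%N then blen k else Tlast T k.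

Definition Pset (n : nat) : {set 'rV['F_2]_n} :=
  (0 : 'rV['F_2]_n) |: (const_mx 1 |: [set delta_mx 0 i | i : 'I_n]).

(* P_{j+1} (0-indexed j) *)
Definition Pblk (T k j : nat) : {set 'rV['F_2]_(blk_size T k j)} :=
  Pset (blk_size T k j).

(* entry at nat position m of v (0 outside range) *)
Definition entry (T : nat) (v : 'rV['F_2]_T) (m : nat) : 'F_2 :=
  if insub m is Some i then v 0 i else 0.

Definition block (T k : nat) (v : 'rV['F_2]_T) (j : nat) : 'rV['F_2]_(blk_size T k j) :=
  \row_(i < blk_size T k j) entry v (blen k * j + i).

(* rows of P: the concatenations (v_1, ..., v_{T_c}) with v_j in P_j,
   i.e. the vectors of F_2^T whose j-th block lies in P_j for every j *)
Definition Prows (T k : nat) : {set 'rV['F_2]_T} :=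
  [set v | [forall j : 'I_(Tc T k), block k v j \in Pblk T k j]].

Definition row_count (T k : nat) : nat :=
  if k == 1%N then (2 ^ T)%N
  else if Tlast T k == 1%N then (2 * (2 * k + 1) ^ (Tc T k).-1)%N
  else ((2 * k + 1) ^ (Tc T k).-1 * (Tlast T k + 2))%N.

From HB Require Import structures.
From mathcomp Require Import all_boot all_order all_algebra.
From mathcomp Require Import zify.
Import GRing.Theory.
Set Implicit Arguments. Unset Strict Implicit.
Local Open Scope ring_scope.

(* Each block has at most 2k - 1 coordinates. A block vector whose support has
   at most k ones is the sum of those unit vectors; otherwise its complement
   has fewer than k ones, and the vector is the all-ones vector plus the unit
   vectors of the complement. Padding every block cover with zero vectors to
   exactly k terms and concatenating the t-th terms across the blocks yields k
   rows of P summing to the given vector. *)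

Lemma divn_modn_mulnDr b j i : (i < b)%N ->
  ((b * j + i) %/ b = j)%N /\ ((b * j + i) %% b = i)%N.
Proof.
move=> i_lt; have b_gt0 : (0 < b)%N by apply: leq_ltn_trans i_lt.
by rewrite mulnC divnMDl // modnMDl divn_small ?modn_small ?addn0.
Qed.

Lemma F2_eq0_or_eq1 (a : 'F_2) : a = 0 \/ a = 1.
Proof. by case: a => [[|[|n]] lt_n2] //=; [left|right]; apply/val_inj. Qed.

Section UnitVectorSet.
Variable n : nat.

Lemma delta_row_inj : injective (fun i : 'I_n => delta_mx 0 i : 'rV['F_2]_n).
Proof.
move=> i j /(congr1 (fun M : 'rV['F_2]_n => M 0 i)); rewrite !mxE !eqxx /=.
by case: eqP => // _ /eqP; rewrite eq_sym oner_eq0.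
Qed.

Lemma card_Pset : (0 < n)%N -> #|Pset n| = (if n == 1%N then 2 else n + 2)%N.
Proof.
move=> n_gt0; rewrite /Pset; set D := [set _ | _ in _].
have cardD : #|D| = n by rewrite card_imset ?card_ord //; apply: delta_row_inj.
have zero_neq1 : (0 : 'rV['F_2]_n) != const_mx 1.
  apply/eqP => /(congr1 (fun M : 'rV['F_2]_n => M 0 (Ordinal n_gt0))).
  by move/esym/eqP; rewrite !mxE oner_eq0.
have zero_notin_D : (0 : 'rV['F_2]_n) \notin D.
  apply/imsetP => -[i _] /(congr1 (fun M : 'rV['F_2]_n => M 0 i)).
  by move/esym/eqP; rewrite !mxE !eqxx oner_eq0.
rewrite cardsU1 in_setU1 negb_or zero_neq1 zero_notin_D cardsU1 cardD /=.
have [n1 | n_neq1] := eqVneq n 1%N.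
  subst n; suff -> : const_mx 1 \in D by [].
  by apply/imsetP; exists ord0 => //; apply/matrixP => i j; rewrite !mxE !ord1.
suff -> : const_mx 1 \notin D by rewrite /=; lia.
apply/imsetP => -[i _].
have [j] : exists j : 'I_n, j \in [set~ i].
  by apply/card_gt0P; rewrite cardsC1 card_ord; lia.
rewrite !inE => j_neq_i.
move/(congr1 (fun M : 'rV['F_2]_n => M 0 j)) /eqP.
by rewrite !mxE (negbTE j_neq_i) oner_eq0.
Qed.

Lemma sum_delta_rowE (A : {set 'I_n}) l :
  (\sum_(i in A) delta_mx 0 i : 'rV['F_2]_n) 0 l = (l \in A)%:R.
Proof.
rewrite summxE; under eq_bigr => i _ do rewrite mxE eqxx /=.
have [l_in_A | l_notin_A] := boolP (l \in A).
  rewrite (bigD1 l) //= eqxx big1 ?addr0 // => i /andP[_ i_neq_l].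
  by rewrite eq_sym (negbTE i_neq_l).
by rewrite big1 // => i i_in_A; case: eqP l_notin_A => // ->; rewrite i_in_A.
Qed.

Lemma Pset_cover k (y : 'rV['F_2]_n) : (n <= 2 * k - 1)%N ->
  exists s : seq 'rV['F_2]_n,
    [/\ (size s <= k)%N, all (mem (Pset n)) s & \sum_(r <- s) r = y].
Proof.
move=> n_le; set S : {set 'I_n} := [set i | y 0 i != 0].
pose units (A : {set 'I_n}) := [seq delta_mx 0 i : 'rV['F_2]_n | i <- enum A].
have units_in_Pset (A : {set 'I_n}) : all (mem (Pset n)) (units A).
  by apply/allP => _ /mapP[i _ ->]; rewrite !inE imset_f ?orbT.
have size_units (A : {set 'I_n}) : size (units A) = #|A|.
  by rewrite size_map -cardE.
have sum_units (A : {set 'I_n}) :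
    \sum_(r <- units A) r = \sum_(i in A) delta_mx 0 i.
  by rewrite big_map big_enum.
have cardSC := cardsC S; rewrite card_ord in cardSC.
have [S_le_k | k_lt_S] := leqP #|S| k.
  exists (units S); split => //; first by rewrite size_units.
  apply/matrixP => i l; rewrite ord1 sum_units sum_delta_rowE inE.
  by case: (F2_eq0_or_eq1 (y 0 l)) => ->.
exists (const_mx 1 :: units (~: S)); split.
- by rewrite /= size_units; lia.
- by rewrite /= units_in_Pset andbT !inE eqxx orbT.
- apply/matrixP => i l; rewrite ord1 big_cons sum_units mxE sum_delta_rowE.
  rewrite mxE !inE.
  case: (F2_eq0_or_eq1 (y 0 l)) => ->; rewrite ?eqxx ?oner_eq0 /= ?addr0 //.
  exact: (pchar_Fp_0 (isT : prime 2)).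
Qed.

End UnitVectorSet.

Lemma entry_ord n (v : 'rV['F_2]_n) (i : 'I_n) : entry v i = v 0 i.
Proof. by rewrite /entry valK. Qed.

Lemma entry_lt n (v : 'rV['F_2]_n) m (m_lt : (m < n)%N) :
  entry v m = v 0 (Ordinal m_lt).
Proof. by rewrite /entry insubT. Qed.

Section Blocks.
Variables T k : nat.
Hypotheses (k_gt0 : (0 < k)%N) (T_gt0 : (0 < T)%N).

Let blen_gt0 : (0 < blen k)%N.
Proof. rewrite /blen; lia. Qed.

Lemma Tc_bounds : (blen k * (Tc T k).-1 < T <= blen k * Tc T k)%N.
Proof.
rewrite /Tc /ceil_div; set b := blen k.
have := divn_eq (T + b.-1) b; have := ltn_pmod (T + b.-1) blen_gt0.
set q := (_ %/ _)%N; set r := (_ %% _)%N; nia.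
Qed.

Lemma Tc_gt0 : (0 < Tc T k)%N.
Proof. have := Tc_bounds; nia. Qed.

Lemma Tlast_gt0 : (0 < Tlast T k)%N.
Proof. have := Tc_bounds; rewrite /Tlast; lia. Qed.

Lemma Tlast_le_blen : (Tlast T k <= blen k)%N.
Proof. have := Tc_bounds; have := Tc_gt0; rewrite /Tlast; nia. Qed.

Lemma blk_size_le_blen j : (blk_size T k j <= blen k)%N.
Proof. by rewrite /blk_size; case: ifP => // _; apply: Tlast_le_blen. Qed.

Lemma blk_size_gt0 j : (0 < blk_size T k j)%N.
Proof. by rewrite /blk_size; case: ifP => // _; apply: Tlast_gt0. Qed.

Lemma block_pos_lt j i :
  (j < Tc T k)%N -> (i < blk_size T k j)%N -> (blen k * j + i < T)%N.
Proof. have := Tc_bounds; rewrite /blk_size /Tlast; case: ifP; nia. Qed.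

Lemma pos_in_block m : (m < T)%N ->
  (m %/ blen k < Tc T k)%N /\ (m %% blen k < blk_size T k (m %/ blen k))%N.
Proof.
have := Tc_bounds; have := divn_eq m (blen k); have := ltn_pmod m blen_gt0.
rewrite /blk_size /Tlast; set q := (m %/ _)%N; set r := (m %% _)%N.
case: ifP => *; split; nia.
Qed.

Local Notation blocks := (forall j : 'I_(Tc T k), 'rV['F_2]_(blk_size T k j)).

Definition concat_blocks (F : blocks) : 'rV['F_2]_T :=
  \row_(m < T)
    if (insub (m %/ blen k)%N : option 'I_(Tc T k)) is Some j
    then entry (F j) (m %% blen k)%N else 0.

Lemma block_concat (F : blocks) (j : 'I_(Tc T k)) :
  block k (concat_blocks F) j = F j.
Proof.
apply/matrixP => a i; rewrite ord1 mxE.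
rewrite (entry_lt _ (block_pos_lt (ltn_ord j) (ltn_ord i))) mxE.
have [-> ->] := divn_modn_mulnDr j (leq_trans (ltn_ord i) (blk_size_le_blen j)).
by rewrite valK entry_ord.
Qed.

Lemma block_inj (v w : 'rV['F_2]_T) :
  (forall j : 'I_(Tc T k), block k v j = block k w j) -> v = w.
Proof.
move=> eq_blocks; apply/matrixP => a m; rewrite ord1.
have [j_lt i_lt] := pos_in_block (ltn_ord m).
have := congr1 (fun u : 'rV_(blk_size T k (m %/ blen k)) => u 0 (Ordinal i_lt))
  (eq_blocks (Ordinal j_lt)).
by rewrite !mxE /= mulnC -divn_eq !entry_ord.
Qed.

Lemma block_sum (s : seq 'rV['F_2]_T) (j : 'I_(Tc T k)) :
  block k (\sum_(r <- s) r) j = \sum_(r <- s) block k r j.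
Proof.
apply/matrixP => a i; rewrite summxE mxE; under [RHS]eq_bigr do rewrite mxE.
by rewrite /entry; case: insub => [m|]; rewrite ?summxE // big1.
Qed.

Lemma card_Prows : #|Prows T k| = (\prod_(j < Tc T k) #|Pblk T k j|)%N.
Proof.
pose fT := {dffun blocks}.
pose inP (j : 'I_(Tc T k)) (v : 'rV['F_2]_(blk_size T k j)) := v \in Pblk T k j.
have concat_inj : injective (fun f : fT => concat_blocks f).
  move=> f g /(congr1 (fun v => block k v _)) eq_fg; apply/ffunP => j.
  by have := eq_fg j; rewrite !block_concat.
have -> : Prows T k = [set concat_blocks f | f : fT in family inP].
  apply/setP => v; rewrite inE.
  apply/forallP/imsetP => [v_blocks | [f f_in ->] j].
    exists [ffun j : 'I_(Tc T k) => block k v j].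
      by apply/familyP => j; rewrite ffunE; apply: v_blocks.
    by apply: (block_inj (v := v)) => j; rewrite block_concat ffunE.
  by rewrite block_concat; apply: (familyP f_in).
by rewrite card_imset // card_family foldrE big_image.
Qed.

Lemma card_Pblk j :
  #|Pblk T k j| = (if blk_size T k j == 1%N then 2 else blk_size T k j + 2)%N.
Proof. exact/card_Pset/blk_size_gt0. Qed.

Lemma prod_card_Pblk : (\prod_(j < Tc T k) #|Pblk T k j|)%N = row_count T k.
Proof.
have [c Tc_eq] : exists c, Tc T k = c.+1.
  by exists (Tc T k).-1; rewrite prednK ?Tc_gt0.
under eq_bigr do rewrite card_Pblk.
rewrite Tc_eq big_ord_recr /=.
have inner_blk (j : 'I_c) : blk_size T k j = blen k.
  by rewrite /blk_size Tc_eq ltnS ltn_ord.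
have -> : blk_size T k c = Tlast T k by rewrite /blk_size Tc_eq ltnn.
under eq_bigr do rewrite inner_blk.
rewrite prod_nat_const card_ord /row_count Tc_eq /=.
have [k1 | k_neq1] := eqVneq k 1%N.
  have blen1 : blen k = 1%N by rewrite k1.
  have Tlast1 : Tlast T k = 1%N.
    by have := Tlast_le_blen; have := Tlast_gt0; lia.
  have Tc_T : Tc T k = T by rewrite /Tc /ceil_div blen1 addn0 divn1.
  by rewrite blen1 Tlast1 /= -expnSr -Tc_eq Tc_T.
have -> : (blen k == 1%N) = false by rewrite /blen; lia.
have -> : (blen k + 2 = 2 * k + 1)%N by rewrite /blen; lia.
by case: eqP => _ //; rewrite mulnC.
Qed.

Lemma Prows_cover (x : 'rV['F_2]_T) :
  exists s : seq 'rV['F_2]_T,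
    [/\ (size s <= k)%N, all (mem (Prows T k)) s & \sum_(r <- s) r = x].
Proof.
have block_cover j : exists s : seq 'rV['F_2]_(blk_size T k j),
    [&& size s == k, all (mem (Pblk T k j)) s & \sum_(r <- s) r == block k x j].
  have blk_le : (blk_size T k j <= 2 * k - 1)%N by apply: blk_size_le_blen.
  have [s [s_le s_in s_sum]] := Pset_cover (block k x j) blk_le.
  exists (s ++ nseq (k - size s) 0).
  rewrite size_cat size_nseq all_cat s_in big_cat /=.
  rewrite subnKC // eqxx big_nseq iter_addr_0 mul0rn addr0 s_sum eqxx andbT.
  by apply/allP => _ /nseqP[-> _]; rewrite !inE eqxx.
pose cover (j : 'I_(Tc T k)) := xchoose (block_cover j).
have /(_ _)/and3P coverP j := xchooseP (block_cover j).
pose row t := concat_blocks (fun j => nth 0 (cover j) t).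
exists (mkseq row k); split; first by rewrite size_mkseq.
  apply/allP => r /mapP[t]; rewrite mem_iota => /andP[_ t_lt] ->.
  rewrite !inE; apply/forallP => j; rewrite block_concat.
  have [/eqP size_k /allP cover_in _] := coverP j.
  by apply: cover_in; rewrite mem_nth ?size_k.
apply: block_inj => j; rewrite block_sum big_map.
under eq_bigr do rewrite block_concat.
have [/eqP size_k _ /eqP <-] := coverP j.
by rewrite [RHS](big_nth 0) size_k /index_iota subn0.
Qed.

End Blocks.

Theorem mainTheorem6 (T k : nat) (hT : (2 <= T)%N) (hk1 : (1 <= k)%N)
    (hk2 : (k < ceil_div T 2)%N) :
  [/\ #|Prows T k| = (\prod_(j < Tc T k) #|Pblk T k j|)%N,
      (\prod_(j < Tc T k) #|Pblk T k j|)%N = row_count T k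
    & forall x : 'rV['F_2]_T,
        exists s : seq 'rV['F_2]_T,
          [/\ (size s <= k)%N, all (fun r => r \in Prows T k) s
            & (\sum_(r <- s) r)%R = x]].
Proof.
have T_gt0 : (0 < T)%N by apply: leq_trans hT.
split; [exact: card_Prows | exact: prod_card_Pblk | exact: Prows_cover].
Qed.
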